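(* Assume the demand is i.i.d. with pmf $P_X$. Let $\theta\in\mathcal P_S$ and $\xi(w)=\sum_{(x,s):s-x=w}P_X(x)\theta(s)$. Then the structured policy $\mathbf b=(b,b,\dots)$ with respect to $(\theta,\xi)$ is an invariant policy for the initial battery distribution $\theta$.
   Context: $\mathcal X=\{0,\dots,m_x\}$, $\mathcal Y=\{0,\dots,m_y\}$, $\mathcal S=\{0,\dots,m_s\}$ with $m_x\le m_y$; $\mathcal W=\{s-x\}$; $\mathcal P_S$ the pmfs on $\mathcal S$; $\mathcal Y_\circ(w)=\{y\in\mathcal Y:w+y\in\mathcal S\}$. Demand $X_t$ i.i.d. $\sim P_X$ independent of $S_1$. A constant-distribution policy $b$ (conditional pmf with $b(\mathcal Y_\circ(w)\mid w)=1$) draws $Y_t\sim b(\cdot\mid W_t)$, $W_t=S_t-X_t$, $S_{t+1}=S_t+Y_t-X_t$. The structured policy with respect to $(\theta,\xi)$ is $b(y\mid w)=P_X(y)\theta(y+w)/\xi(w)$ for $y\in\mathcal X\cap\mathcal Y_\circ(w)$ and $0$ otherwise (when $\xi(w)=0$, $b(\cdot\mid w)$ is an arbitrary pmf on $\mathcal Y_\circ(w)$; such $w$ occur with probability zero). With $\theta_t(s)=P(S_t=s\mid Y^{t-1}=y^{t-1})$ and $\xi_t(w)=P(W_t=w\mid Y^{t-1}=y^{t-1})$, $b$ is invariant for initial distribution $\theta_1$ (i.e. when $S_1\sim\theta_1$) if $\theta_t=\theta_1$ and $\xi_t=\xi_1$ for all $t$, where $\xi_1(w)=\sum_{(x,s):s-x=w}P_X(x)\theta_1(s)$.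 *)

From mathcomp Require Import all_boot all_order all_algebra.
Set Implicit Arguments. Unset Strict Implicit. Unset Printing Implicit Defensive.
Import Order.TTheory GRing.Theory Num.Theory.
Local Open Scope ring_scope.

Section Model.
Variables (R : realFieldType) (mx my ms : nat).

Definition ext (m : nat) (f : {ffun 'I_m.+1 -> R}) (k : int) : R :=
  match k with
  | Posz n => if (n < m.+1)%N then f (inord n) else 0
  | Negz _ => 0
  end.

Definition is_pmf (m : nat) (f : {ffun 'I_m.+1 -> R}) : Prop :=
  (forall i, 0 <= f i) /\ \sum_i f i = 1.

Definition inW (w : int) : Prop :=
  exists (s : 'I_ms.+1) (x : 'I_mx.+1), w = (s : nat)%:Z - (x : nat)%:Z.

Definition inYo (w : int) (y : 'I_my.+1) : bool :=
  (0 <= w + (y : nat)%:Z) && (w + (y : nat)%:Z <= (ms : nat)%:Z).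

Definition xi_of (PX : {ffun 'I_mx.+1 -> R}) (th : {ffun 'I_ms.+1 -> R})
  (w : int) : R :=
  \sum_(x : 'I_mx.+1) \sum_(s : 'I_ms.+1 | (s : nat)%:Z - (x : nat)%:Z == w)
     PX x * th s.

Definition cond_pmf_at (b : int -> 'I_my.+1 -> R) (w : int) : Prop :=
  (forall y, 0 <= b w y) /\ \sum_y b w y = 1 /\
  (forall y, ~~ inYo w y -> b w y = 0).

Definition structured (PX : {ffun 'I_mx.+1 -> R}) (th : {ffun 'I_ms.+1 -> R})
  (xi : int -> R) (b : int -> 'I_my.+1 -> R) : Prop :=
  forall w, inW w ->
    if xi w != 0 then
      forall y : 'I_my.+1,
        b w y = (if ((y : nat) <= mx)%N && inYo w y
                 then PX (inord y) * ext th (w + (y : nat)%:Z) / xi w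
                 else 0)
    else cond_pmf_at b w.

Definition traj (n : nat) : finType :=
  ('I_ms.+1 * {ffun 'I_n -> 'I_mx.+1} * {ffun 'I_n -> 'I_my.+1})%type.

Definition S1 n (om : traj n) : 'I_ms.+1 := om.1.1.
Definition Xs n (om : traj n) : {ffun 'I_n -> 'I_mx.+1} := om.1.2.
Definition Ys n (om : traj n) : {ffun 'I_n -> 'I_my.+1} := om.2.

(* state S_{k+1} = S_1 + sum_{i<k} (Y_{i+1} - X_{i+1}) (0-based steps) *)
Definition state n (om : traj n) (k : nat) : int :=
  ((S1 om : nat)%:Z) +
  \sum_(i < n | (i < k)%N) (((Ys om i : nat)%:Z) - ((Xs om i : nat)%:Z)).

(* W_{i+1} = S_{i+1} - X_{i+1} *)
Definition wstate n (om : traj n) (i : 'I_n) : int :=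
  state om i - ((Xs om i : nat)%:Z).

Definition weight (PX : {ffun 'I_mx.+1 -> R}) (th : {ffun 'I_ms.+1 -> R})
  (b : int -> 'I_my.+1 -> R) n (om : traj n) : R :=
  th (S1 om) * \prod_(i < n) (PX (Xs om i) * b (wstate om i) (Ys om i)).

Definition prob PX th b n (A : pred (traj n)) : R :=
  \sum_(om : traj n | A om) weight PX th b om.

Definition prefY k (y : {ffun 'I_k -> 'I_my.+1}) (om : traj k.+1) : bool :=
  [forall i : 'I_k, Ys om (widen_ord (leqnSn k) i) == y i].

End Model.

From mathcomp Require Import all_boot all_order all_algebra.
Set Implicit Arguments. Unset Strict Implicit. Unset Printing Implicit Defensive.
Import Order.TTheory GRing.Theory Num.Theory.
Local Open Scope ring_scope.

(* By induction on k, the unnormalised joint law of (Y^k = y, S_{k+1}) is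
   c_k * theta.  For the step, the structured policy satisfies
   xi(w) b(y | w) = P_X(y) theta(w + y), so the mass that the transition
   s -> s - x + y sends into a state s' is P_X(y) theta(s'): theta is carried
   to a multiple of itself.  Normalising gives S_{k+1} ~ theta given Y^k = y,
   and then W_{k+1} = S_{k+1} - X_{k+1} ~ xi since X_{k+1} is fresh demand. *)

Section RconsFfun.
Variables (T : Type) (n : nat).

Definition rcons_ffun (f : {ffun 'I_n -> T}) (t : T) : {ffun 'I_n.+1 -> T} :=
  [ffun i => if unlift ord_max i is Some j then f j else t].

Definition belast_ffun (g : {ffun 'I_n.+1 -> T}) : {ffun 'I_n -> T} :=
  [ffun j => g (widen_ord (leqnSn n) j)].

Lemma widen_ord_lift_max (j : 'I_n) : widen_ord (leqnSn n) j = lift ord_max j.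
Proof. by apply: val_inj; rewrite /= /bump leqNgt ltn_ord. Qed.

Lemma rcons_ffun_max f t : rcons_ffun f t ord_max = t.
Proof. by rewrite ffunE unlift_none. Qed.

Lemma rcons_ffun_widen f t j : rcons_ffun f t (widen_ord (leqnSn n) j) = f j.
Proof. by rewrite ffunE widen_ord_lift_max liftK. Qed.

Lemma rcons_ffunK f t : belast_ffun (rcons_ffun f t) = f.
Proof. by apply/ffunP => j; rewrite ffunE rcons_ffun_widen. Qed.

Lemma belast_ffunK g : rcons_ffun (belast_ffun g) (g ord_max) = g.
Proof.
apply/ffunP => i; rewrite ffunE; case: unliftP => [j ->|->] //.
by rewrite ffunE widen_ord_lift_max.
Qed.

End RconsFfun.

Lemma eq_rcons_ffun (T : eqType) n (f : {ffun 'I_n -> T}) t g :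
  (rcons_ffun f t == g) = (f == belast_ffun g) && (t == g ord_max).
Proof.
apply/eqP/andP => [<-|[/eqP-> /eqP->]]; last exact: belast_ffunK.
by rewrite rcons_ffunK rcons_ffun_max.
Qed.

Section BigNmod.
Variable V : nmodType.

Lemma sum_widen_lt n m (F : 'I_n.+1 -> V) : (m <= n)%N ->
  \sum_(i < n.+1 | (i < m)%N) F i =
  \sum_(i < n | (i < m)%N) F (widen_ord (leqnSn n) i).
Proof.
by move=> le_mn; rewrite big_mkcond big_ord_recr /= ltnNge le_mn addr0 -big_mkcond.
Qed.

Lemma sum_ord_eq_int m (f : int -> V) (z : int) :
  \sum_(s : 'I_m.+1 | (s : nat)%:Z == z) f (s : nat)%:Z =
  if (0 <= z) && (z <= m%:Z) then f z else 0.
Proof.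
case: ifP => [/andP [z0 zm]|hz].
  case: z z0 zm => [k|//] _; rewrite lez_nat -ltnS => lt_km.
  by rewrite (big_pred1 (Ordinal lt_km)).
rewrite big_pred0 // => s; apply/negbTE/eqP => E.
by move: hz; rewrite -E lez_nat -ltnS ltn_ord.
Qed.

Lemma sum_andb_pred1 (I J : finType) (e : I) (A : pred J) (F : I -> J -> V) :
  \sum_(i : I) \sum_(j : J) (if A j && (i == e) then F i j else 0) =
  \sum_(j | A j) F e j.
Proof.
rewrite (bigD1 e) //= [X in _ + X]big1 ?addr0 => [|i /negbTE ne_ie].
  by rewrite [RHS]big_mkcond; apply: eq_bigr => j _; rewrite eqxx andbT.
by apply: big1 => j _; rewrite ne_ie andbF.
Qed.

Lemma sum_ffun_ord0 (T : finType) (F : {ffun 'I_0 -> T} -> V) f0 :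
  \sum_(f : {ffun 'I_0 -> T}) F f = F f0.
Proof. by rewrite (big_pred1 f0) // => f; apply/esym/eqP/ffunP => -[]. Qed.

End BigNmod.

Section Trajectories.
Variables (R : realFieldType) (mx my ms : nat).
Variables (PX : {ffun 'I_mx.+1 -> R}) (th : {ffun 'I_ms.+1 -> R})
  (b : int -> 'I_my.+1 -> R).

Local Notation traj := (traj mx my ms).

Definition traj_rcons n (om : traj n) (x : 'I_mx.+1) (yl : 'I_my.+1) : traj n.+1 :=
  ((S1 om, rcons_ffun (Xs om) x), rcons_ffun (Ys om) yl).

Lemma sum_traj_rcons n (F : traj n.+1 -> R) :
  \sum_(om : traj n.+1) F om =
  \sum_(x : 'I_mx.+1) \sum_(yl : 'I_my.+1) \sum_(om : traj n) F (traj_rcons om x yl).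
Proof.
rewrite pair_big /= pair_big /=.
pose belast_traj (om : traj n.+1) :=
  ((Xs om ord_max, Ys om ord_max),
   ((S1 om, belast_ffun (Xs om)), belast_ffun (Ys om))).
rewrite (reindex (fun p => traj_rcons p.2 p.1.1 p.1.2)) /=.
  by apply: eq_bigr => -[[x yl] om].
exists belast_traj => [[[x yl] [[s1 xs] ys]]|[[s1 xs] ys]] _.
  by rewrite /belast_traj /= !rcons_ffun_max !rcons_ffunK.
by rewrite /traj_rcons /= !belast_ffunK.
Qed.

Lemma sum_traj n (F : traj n -> R) :
  \sum_(om : traj n) F om =
  \sum_(s1 : 'I_ms.+1) \sum_(xs : {ffun 'I_n -> 'I_mx.+1})
    \sum_(ys : {ffun 'I_n -> 'I_my.+1}) F ((s1, xs), ys).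
Proof. by rewrite pair_big /= pair_big /=; apply: eq_bigr => -[[]]. Qed.

Section Rcons.
Variables (n : nat) (om : traj n) (x : 'I_mx.+1) (yl : 'I_my.+1).

Lemma state_rcons m : (m <= n)%N -> state (traj_rcons om x yl) m = state om m.
Proof.
move=> le_mn; rewrite /state sum_widen_lt //; congr (_ + _).
by apply: eq_bigr => i _; rewrite /= !rcons_ffun_widen.
Qed.

Lemma state_rcons_last :
  state (traj_rcons om x yl) n.+1 = state om n + ((yl : nat)%:Z - (x : nat)%:Z).
Proof.
rewrite /state big_mkcond big_ord_recr /= ltnSn -addrA !rcons_ffun_max.
congr (_ + (_ + _)); rewrite [RHS]big_mkcond; apply: eq_bigr => i _ /=.
by rewrite !rcons_ffun_widen ltnS ltn_ord ltnW.
Qed.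

Lemma wstate_rcons i :
  wstate (traj_rcons om x yl) (widen_ord (leqnSn n) i) = wstate om i.
Proof. by rewrite /wstate state_rcons ?(ltnW (ltn_ord i)) //= rcons_ffun_widen. Qed.

Lemma wstate_rcons_last :
  wstate (traj_rcons om x yl) ord_max = state om n - (x : nat)%:Z.
Proof. by rewrite /wstate state_rcons //= rcons_ffun_max. Qed.

Lemma weight_rcons :
  weight PX th b (traj_rcons om x yl) =
  weight PX th b om * (PX x * b (state om n - (x : nat)%:Z) yl).
Proof.
rewrite /weight big_ord_recr /= -mulrA wstate_rcons_last !rcons_ffun_max.
by congr (_ * (_ * _)); apply: eq_bigr => i _; rewrite wstate_rcons /= !rcons_ffun_widen.
Qed.

Lemma prefY_rcons (y : {ffun 'I_n -> 'I_my.+1}) :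
  prefY y (traj_rcons om x yl) = (Ys om == y).
Proof.
apply/forallP/eqP => [eq_y|<- i]; last by rewrite /= rcons_ffun_widen.
by apply/ffunP => i; move/eqP: (eq_y i); rewrite /= rcons_ffun_widen.
Qed.

End Rcons.

End Trajectories.

Section StructuredPolicy.
Variables (R : realFieldType) (mx my ms : nat).
Variables (PX : {ffun 'I_mx.+1 -> R}) (th : {ffun 'I_ms.+1 -> R})
  (b : int -> 'I_my.+1 -> R).
Hypotheses (le_mx_my : (mx <= my)%N) (PX_pmf : is_pmf PX) (th_pmf : is_pmf th)
  (b_structured : structured PX th (xi_of PX th) b).

Local Notation xi := (xi_of PX th).

Lemma ext_ord (s : 'I_ms.+1) : ext th (s : nat)%:Z = th s.
Proof. by rewrite /= ltn_ord inord_val. Qed.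

Lemma xi_of_eq0 w : xi w = 0 ->
  forall (x : 'I_mx.+1) (s : 'I_ms.+1), (s : nat)%:Z - (x : nat)%:Z == w ->
  PX x * th s = 0.
Proof.
have mass_ge0 x s : 0 <= PX x * th s by rewrite mulr_ge0 ?PX_pmf.1 ?th_pmf.1.
move=> /psumr_eq0P xi_w0 x s sx_w.
have /psumr_eq0P-> // :
  \sum_(s' : 'I_ms.+1 | (s' : nat)%:Z - (x : nat)%:Z == w) PX x * th s' = 0.
by apply: xi_w0 => // x' _; apply: sumr_ge0 => s' _; apply: mass_ge0.
Qed.

Lemma xi_ofE w : xi w =
  \sum_(x < mx.+1) (if (0 <= w + (x : nat)%:Z) && (w + (x : nat)%:Z <= (ms : nat)%:Z)
                    then PX (inord x) * ext th (w + (x : nat)%:Z) else 0).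
Proof.
apply: eq_bigr => x _; rewrite inord_val -mulr_sumr.
under eq_bigl => s do rewrite subr_eq.
under eq_bigr => s _ do rewrite -ext_ord.
by rewrite (sum_ord_eq_int _ (ext th)); case: ifP; rewrite ?mulr0.
Qed.

Lemma structured_sum1 w : inW mx ms w -> \sum_y b w y = 1.
Proof.
move=> /b_structured; case: ifP => [xi_w_neq0 bE|_ [_ []] //].
under eq_bigr => y _ do rewrite bE.
pose G (k : nat) := if (0 <= w + k%:Z) && (w + k%:Z <= (ms : nat)%:Z)
                    then PX (inord k) * ext th (w + k%:Z) else 0.
transitivity ((\sum_(y < my.+1 | (y < mx.+1)%N) G y) / xi w).
  rewrite big_distrl [RHS]big_mkcond; apply: eq_bigr => y _ /=.
  by rewrite /G /inYo ltnS; case: (y <= mx)%N => //=; case: ifP; rewrite ?mul0r.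
by rewrite -(big_ord_widen _ G (le_mx_my : (mx.+1 <= my.+1)%N)) -xi_ofE divff.
Qed.

(* Also when [xi w = 0], where [b w] is arbitrary: the mass [th s * PX x]
   is then one of the vanishing summands of [xi w]. *)
Lemma structured_mass (x : 'I_mx.+1) (s : 'I_ms.+1) yl :
  let w := (s : nat)%:Z - (x : nat)%:Z in
  th s * PX x * b w yl =
  th s * PX x * (if ((yl : nat) <= mx)%N && inYo ms w yl
                 then PX (inord yl) * ext th (w + (yl : nat)%:Z) / xi w else 0).
Proof.
move=> w; have /b_structured : inW mx ms w by exists s, x.
case: ifP => [_ -> //|/negbFE/eqP xi_w0 _].
by rewrite [th s * _]mulrC (xi_of_eq0 xi_w0) ?eqxx // !mul0r.
Qed.

Lemma mass_flow_into (yl : 'I_my.+1) (s' : 'I_ms.+1) :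
  \sum_(x : 'I_mx.+1)
    \sum_(s : 'I_ms.+1 | (s : nat)%:Z - (x : nat)%:Z == (s' : nat)%:Z - (yl : nat)%:Z)
      th s * PX x * b ((s : nat)%:Z - (x : nat)%:Z) yl =
  (if ((yl : nat) <= mx)%N then PX (inord yl) else 0) * th s'.
Proof.
set w := (s' : nat)%:Z - (yl : nat)%:Z.
have inYo_w : inYo ms w yl by rewrite /inYo subrK [X in _ && X]lez_nat leq_ord.
transitivity
  (xi w * ((if ((yl : nat) <= mx)%N then PX (inord yl) else 0) * th s' / xi w)).
  rewrite big_distrl; apply: eq_bigr => x _; rewrite big_distrl.
  apply: eq_bigr => s /eqP sx_w; rewrite structured_mass /= sx_w inYo_w subrK ext_ord.
  by case: (yl <= mx)%N; rewrite /= ?(mulrC (th s)) ?mul0r ?mulr0 ?mulrA.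
have [xi_w0|xi_w_neq0] := eqVneq (xi w) 0; last by rewrite mulrC divfK.
case: ifP => [le_yl_mx|]; last by rewrite !mul0r mulr0.
by rewrite xi_w0 mul0r (xi_of_eq0 xi_w0) //= inordK.
Qed.

Lemma sum_transition (yl : 'I_my.+1) (H : int -> R) :
  \sum_(x : 'I_mx.+1) \sum_(s : 'I_ms.+1)
     th s * (PX x * b ((s : nat)%:Z - (x : nat)%:Z) yl *
             H ((s : nat)%:Z + ((yl : nat)%:Z - (x : nat)%:Z))) =
  (if ((yl : nat) <= mx)%N then PX (inord yl) else 0) *
    \sum_(s : 'I_ms.+1) th s * H (s : nat)%:Z.
Proof.
rewrite mulr_sumr.
under [RHS]eq_bigr => s' _ do rewrite mulrA -mass_flow_into big_distrl.
rewrite [RHS]exchange_big; apply: eq_bigr => x _ /=.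
under [RHS]eq_bigr => s' _ do rewrite big_distrl big_mkcond.
rewrite [RHS]exchange_big; apply: eq_bigr => s _ /=.
under [RHS]eq_bigr => s' _ do rewrite eq_sym subr_eq.
rewrite -big_mkcond /= (sum_ord_eq_int _ (fun t => th s * PX x * b _ yl * H t)).
have := structured_mass x s yl; rewrite /= /inYo addrAC -addrA.
case: (0 <= _ <= _); first by rewrite !mulrA.
by rewrite andbF mulr0 !mulrA => ->; rewrite !mul0r.
Qed.

Local Notation traj := (traj mx my ms).
Local Notation weight := (weight PX th b).
Local Notation prob := (prob PX th b).

Lemma state_law_proportional n (y : {ffun 'I_n -> 'I_my.+1}) :
  exists c, forall H : int -> R,
    \sum_(om : traj n | Ys om == y) weight om * H (state om n) =
    c * \sum_(s : 'I_ms.+1) th s * H (s : nat)%:Z.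
Proof.
elim: n y => [|n IHn] y.
  exists 1 => H; rewrite mul1r big_mkcond sum_traj; apply: eq_bigr => s _.
  rewrite (sum_ffun_ord0 _ [ffun=> ord0]) (sum_ffun_ord0 _ y) eqxx.
  by rewrite /weight /state /= !big_ord0 mulr1 addr0.
have [c Hc] := IHn (belast_ffun y).
exists (c * if ((y ord_max : nat) <= mx)%N then PX (inord (y ord_max)) else 0) => H.
rewrite big_mkcond sum_traj_rcons.
under eq_bigr => x _ do under eq_bigr => yl _ do under eq_bigr => om _ do
  rewrite [_ == y]eq_rcons_ffun weight_rcons state_rcons_last -mulrA.
under eq_bigr => x _ do rewrite sum_andb_pred1 (Hc (fun t =>
  PX x * b (t - (x : nat)%:Z) (y ord_max) *
  H (t + ((y ord_max : nat)%:Z - (x : nat)%:Z)))).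
by rewrite -mulr_sumr sum_transition // mulrA.
Qed.

Section PrefixProbabilities.
Variables (k : nat) (y : {ffun 'I_k -> 'I_my.+1}) (c : R).
Hypothesis state_law : forall H : int -> R,
  \sum_(om : traj k | Ys om == y) weight om * H (state om k) =
  c * \sum_(s : 'I_ms.+1) th s * H (s : nat)%:Z.

Lemma prob_rcons_event (G : int -> 'I_mx.+1 -> bool) (A : pred (traj k.+1)) :
  (forall om x yl, A (traj_rcons om x yl) = (Ys om == y) && G (state om k) x) ->
  prob A = c * \sum_(s : 'I_ms.+1) th s *
             \sum_(x : 'I_mx.+1) (if G (s : nat)%:Z x then PX x else 0).
Proof.
move=> AE; rewrite /prob big_mkcond sum_traj_rcons.
under eq_bigr => x _ do rewrite exchange_big.
rewrite exchange_big /=.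
under eq_bigr => om _ do under eq_bigr => x _ do under eq_bigr => yl _ do
  rewrite AE weight_rcons.
pose H t := \sum_(x : 'I_mx.+1) \sum_(yl : 'I_my.+1)
              (if G t x then PX x * b (t - (x : nat)%:Z) yl else 0).
transitivity (\sum_(om : traj k | Ys om == y) weight om * H (state om k)).
  rewrite [RHS]big_mkcond; apply: eq_bigr => om _.
  case: (Ys om == y) => /=; last by rewrite big1 // => x _; apply: big1.
  rewrite mulr_sumr; apply: eq_bigr => x _; rewrite mulr_sumr.
  by apply: eq_bigr => yl _; case: ifP; rewrite ?mulr0.
rewrite state_law; congr (_ * _); apply: eq_bigr => s _; congr (_ * _).
apply: eq_bigr => x _; case: ifP => _; last exact: big1.
by rewrite -mulr_sumr structured_sum1 ?mulr1 //; exists s, x.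
Qed.

Lemma prob_prefY : prob (prefY y) = c.
Proof.
rewrite (prob_rcons_event (G := fun _ _ => true)); last first.
  by move=> om x yl; rewrite prefY_rcons andbT.
under eq_bigr => s _ do rewrite PX_pmf.2 mulr1.
by rewrite th_pmf.2 mulr1.
Qed.

Lemma prob_prefY_state (s0 : 'I_ms.+1) :
  prob (fun om => prefY y om && (state om k == (s0 : nat)%:Z)) = c * th s0.
Proof.
rewrite (prob_rcons_event (G := fun t _ => t == (s0 : nat)%:Z)); last first.
  by move=> om x yl; rewrite prefY_rcons state_rcons.
rewrite (bigD1 s0) //= eqxx PX_pmf.2 mulr1 big1 ?addr0 // => s ne_s_s0.
by rewrite big1 ?mulr0 // => x _; rewrite eqz_nat val_eqE (negbTE ne_s_s0).
Qed.

Lemma prob_prefY_wstate w :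
  prob (fun om => prefY y om && (wstate om ord_max == w)) = c * xi w.
Proof.
rewrite (prob_rcons_event (G := fun t x => t - (x : nat)%:Z == w)); last first.
  by move=> om x yl; rewrite prefY_rcons wstate_rcons_last.
congr (_ * _); under eq_bigr => s _ do rewrite mulr_sumr.
rewrite exchange_big; apply: eq_bigr => x _.
by rewrite [RHS]big_mkcond; apply: eq_bigr => s _; case: ifP; rewrite ?mulr0 // mulrC.
Qed.

End PrefixProbabilities.

End StructuredPolicy.

Unset Implicit Arguments.
Set Strict Implicit.

Theorem lemma8 (R : realFieldType) (mx my ms : nat)
  (PX : {ffun 'I_mx.+1 -> R}) (th : {ffun 'I_ms.+1 -> R})
  (b : int -> 'I_my.+1 -> R) :
  (mx <= my)%N ->
  is_pmf PX -> is_pmf th ->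
  structured PX th (xi_of PX th) b ->
  forall (k : nat) (y : {ffun 'I_k -> 'I_my.+1}),
    0 < prob PX th b (prefY y) ->
    (forall s : 'I_ms.+1,
       prob PX th b (fun om => prefY y om && (state om k == (s : nat)%:Z))
         / prob PX th b (prefY y) = th s) /\
    (forall w : int,
       prob PX th b (fun om => prefY y om && (wstate om ord_max == w))
         / prob PX th b (prefY y) = xi_of PX th w).
Proof.
move=> le_mx_my PX_pmf th_pmf b_structured k y.
have [c state_law] := state_law_proportional PX_pmf th_pmf b_structured y.
rewrite (prob_prefY le_mx_my PX_pmf th_pmf b_structured state_law) => c_gt0.
have c_neq0 : c != 0 by rewrite gt_eqF.
split=> [s|w].
  by rewrite (prob_prefY_state le_mx_my PX_pmf b_structured state_law) mulrC mulKf.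
by rewrite (prob_prefY_wstate le_mx_my b_structured state_law) mulrC mulKf.
Qed.
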